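(* Let $(F_n)_{n\ge1}$ be the Fibonacci sequence ($F_1=F_2=1$, $F_{n+2}=F_{n+1}+F_n$). For a positive integer $n$ let $z(n)$ be the smallest positive integer $k$ such that $n\mid F_k$, and let $\ell(n):=\operatorname{lcm}(n,z(n))$. Let $\varphi$ denote Euler's totient function. Then there is an absolute constant $C>0$ such that for all real $y>0$, $$\sum_{q>y,\ q \text{ prime}} \frac{1}{\varphi(\ell(q))}\le \frac{C}{y^{1/4}}.$$ *)

From Stdlib Require Import Reals ClassicalEpsilon.
From mathcomp Require Import all_boot.
Set Implicit Arguments. Unset Strict Implicit. Unset Printing Implicit Defensive.

(* Fibonacci: fib 0 = 0, fib 1 = 1, so fib 1 = fib 2 = 1 (F_1 = F_2 = 1). *)
Fixpoint fib (n : nat) : nat :=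
  match n with
  | 0 => 0
  | S m => match m with 0 => 1 | S k => fib m + fib k end
  end.

Definition is_rank (n k : nat) : Prop :=
  (0 < k)%N /\ (n %| fib k)%N /\ forall j, (0 < j)%N -> (j < k)%N -> ~ (n %| fib j)%N.

(* z(n): the order of appearance (chosen by classical description; unique when it exists) *)
Definition z (n : nat) : nat := epsilon (inhabits 0%N) (fun k => is_rank n k).

Definition ell (n : nat) : nat := lcmn n (z n).

Definition tail_sum (y : R) (N : nat) : R :=
  \big[Rplus/R0]_(0 <= q < N.+1 | prime q && (if Rlt_dec y (INR q) then true else false))
     (Rdiv 1 (INR (totient (ell q)))).

From HB Require Import structures.
From Stdlib Require Import Reals Lra ClassicalEpsilon.
From mathcomp Require Import all_boot all_algebra zify.
Set Implicit Arguments. Unset Strict Implicit. Unset Printing Implicit Defensive.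

(* Let Q be the Fibonacci matrix and S = 2Q - 1, so that S^2 = 5. For a prime
   q other than 2 and 5, expanding (2Q)^q = (S + 1)^q = S^q + 1 over F_q gives
   F_q = 5^((q-1)/2) = +-1 and q | F_(q-1) F_(q+1). Hence z(q) <= q + 1 is prime
   to q, and phi(ell(q)) = (q - 1) phi(z(q)) >= q sqrt(z(q)) / 4 because
   n <= 2 phi(n)^2. Primes with z(q)^2 >= q then contribute O(q^(-5/4)), whose
   tail beyond y telescopes to O(y^(-1/4)). The remaining primes are grouped by
   k = z(q): they divide F_k <= 2^k, so there are at most k of them, each
   exceeding max(y, k^2); the k-th group thus contributes
   O(sqrt(k) / max(y, k^2)), and the sum over k is again O(y^(-1/4)). *)

(** * Fibonacci numbers modulo a prime *)

Section FibonacciMatrix.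
Import GRing.Theory.
Local Open Scope ring_scope.

Variable R : comNzRingType.

Definition fib_mx : 'M[R]_2 := \matrix_(i, j) ((i + j < 2)%N)%:R.

Definition sqrt5_mx : 'M[R]_2 := fib_mx *+ 2 - 1.

Lemma ord2P (i : 'I_2) : i = 0 \/ i = 1.
Proof. by case: i => [[|[|//]] ?]; [left|right]; apply: val_inj. Qed.

Lemma fib_mx_sqr : fib_mx ^+ 2 = fib_mx + 1.
Proof.
apply/matrixP => i j; rewrite expr2 -mulmxE !mxE !big_ord_recl big_ord0 !mxE.
by case: (ord2P i) => ->; case: (ord2P j) => -> /=; rewrite ?(mulr1, mulr0, addr0, add0r).
Qed.

Lemma fib_mx_exp n : fib_mx ^+ n.+1 = fib_mx *+ fib n.+1 + (fib n)%:R.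
Proof.
elim: n => [|n IH]; first by rewrite expr1 addr0.
rewrite exprSr IH mulrDl !mulrnAl mul1r -expr2 fib_mx_sqr mulrnDl.
by rewrite addrAC -mulrnDr.
Qed.

Lemma sqrt5_mx_sqr : sqrt5_mx ^+ 2 = 5%:R.
Proof.
rewrite /sqrt5_mx sqrrB1 exprMn_n fib_mx_sqr.
by rewrite mulrnDl -mulrnA [_ + 1 *+ _]addrC addrK -mulrSr.
Qed.

Lemma fib_mx_exp_pchar q m : q \in [pchar R] -> q = m.*2.+1 ->
  fib_mx ^+ q *+ 2 = sqrt5_mx *+ 5 ^ m + 1.
Proof.
move=> pcharRq qE.
have pcharMq : q \in [pchar 'M[R]_2] := rmorph_pchar (scalar_mx : {rmorphism R -> 'M[R]_2}) pcharRq.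
have two_q : (2%:R : 'M[R]_2) ^+ q = 2%:R.
  by rewrite -(pFrobenius_autE pcharMq) pFrobenius_aut_nat.
rewrite -mulr_natr -two_q -exprMn_comm; last exact: commr_nat.
rewrite mulr_natr -[fib_mx *+ 2](subrK 1) -/sqrt5_mx.
rewrite -(pFrobenius_autE pcharMq) pFrobenius_autD_comm; last exact: commr1.
rewrite !pFrobenius_autE expr1n [in LHS]qE.
by rewrite exprS -mul2n exprM sqrt5_mx_sqr -natrX mulr_natr.
Qed.

Lemma fib_pchar_odd q m : q \in [pchar R] -> q = m.*2.+1 ->
  [/\ (fib q)%:R *+ 2 = 5 ^+ m *+ 2 :> R,
       (fib q.+1)%:R *+ 2 = 5 ^+ m + 1 :> R
     & (fib q.-1)%:R *+ 2 = 1 - 5 ^+ m :> R].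
Proof.
move=> pcharRq qE; have := fib_mx_exp_pchar pcharRq qE.
case: q qE {pcharRq} => // p _; rewrite fib_mx_exp => /matrixP entry.
rewrite -[fib p.+2]/(fib p.+1 + fib p) -[p.+1.-1]/p natrD.
move: (fib p.+1) (fib p) entry => a b entry.
have := entry 0 1; have := entry 0 0; have := entry 1 1.
have two_sub_one : (1 *+ 2 - 1 : R) = 1 by rewrite mulr2n addrK.
rewrite /sqrt5_mx !(mulmxnE, mxE) /= -!natrX two_sub_one.
rewrite !(mul0rn, add0r, addr0, subr0, sub0r, mulNrn, mulr1n) => e11 e00 e01.
split=> //; first by rewrite e01 -mulrnA mulnC mulrnA.
by rewrite e11 addrC.
Qed.

End FibonacciMatrix.

Section FibonacciModPrime.
Import GRing.Theory.
Local Open Scope ring_scope.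

Variable q : nat.
Hypotheses (q_prime : prime q) (q_neq2 : q != 2%N) (q_neq5 : q != 5%N).

Local Notation F := 'F_q.

Let dvdn_Fp n : (q %| n)%N = ((n%:R : F) == 0).
Proof. by rewrite (dvdn_pcharf (pchar_Fp q_prime)). Qed.

Let q_half : q = (q./2).*2.+1.
Proof.
by rewrite -[LHS]odd_double_half; case: (even_prime q_prime) q_neq2 => [->|->].
Qed.

Let two_neq0 : (2%:R : F) != 0.
Proof. by rewrite -dvdn_Fp dvdn_prime2. Qed.

Let five_neq0 : (5%:R : F) != 0.
Proof. by rewrite -dvdn_Fp dvdn_prime2. Qed.

Let mul2nI (x y : F) : x *+ 2 = y *+ 2 -> x = y.
Proof. by rewrite -[x *+ 2]mulr_natr -[y *+ 2]mulr_natr => /(mulIf two_neq0). Qed.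

Lemma prime_ndvd_fib_odd : ~~ (q %| fib q)%N.
Proof.
case: (fib_pchar_odd (pchar_Fp q_prime) q_half) => fib_q _ _.
by rewrite dvdn_Fp (mul2nI fib_q) expf_neq0.
Qed.

Lemma prime_dvd_fib_pred_or_succ : (q %| fib q.-1)%N || (q %| fib q.+1)%N.
Proof.
case: (fib_pchar_odd (pchar_Fp q_prime) q_half) => _ fib_succ fib_pred.
have : (5%:R : F) ^+ q./2 ^+ 2 == 1.
  apply/eqP/(mulIf five_neq0); rewrite mul1r -exprM muln2 -exprSr -q_half.
  by rewrite -(pFrobenius_autE (pchar_Fp q_prime)) pFrobenius_aut_nat.
rewrite sqrf_eq1 !dvdn_Fp => /orP[] /eqP s_pm1.
  by apply/orP; left; apply/eqP/mul2nI; rewrite fib_pred s_pm1 subrr mul0rn.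
by apply/orP; right; apply/eqP/mul2nI; rewrite fib_succ s_pm1 addNr mul0rn.
Qed.

End FibonacciModPrime.

Lemma prime_ndvd_fib q : prime q -> q != 5 -> ~~ (q %| fib q).
Proof.
move=> q_prime q_neq5; have [-> //|q_neq2] := eqVneq q 2.
exact: prime_ndvd_fib_odd.
Qed.

Lemma prime_dvd_fib_le q : prime q -> exists2 k, 0 < k <= q.+1 & q %| fib k.
Proof.
move=> q_prime; have [-> | q_neq2] := eqVneq q 2; first by exists 3.
have [-> | q_neq5] := eqVneq q 5; first by exists 5.
have q_gt1 := prime_gt1 q_prime.
case/orP: (prime_dvd_fib_pred_or_succ q_prime q_neq2 q_neq5) => dvd_fib.
  by exists q.-1 => //; apply/andP; split; lia.
by exists q.+1; rewrite ?leqnn.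
Qed.

(** * The rank of appearance of a prime *)

Lemma is_rank_le n k j : is_rank n k -> 0 < j -> n %| fib j -> k <= j.
Proof. by case=> _ [_ k_min] j_gt0 dvd_j; rewrite leqNgt; apply/negP => /k_min-/(_ j_gt0). Qed.

Lemma z_is_rank n : (exists2 k, 0 < k & n %| fib k) -> is_rank n (z n).
Proof.
case=> k k_gt0 dvd_k; apply: epsilon_spec.
have [|j /andP[j_gt0 dvd_j] j_min] := ex_minnP (P := fun j => (0 < j) && (n %| fib j)).
  by exists k; rewrite k_gt0.
exists j; split=> //; split=> // i i_gt0 lt_ij dvd_i.
by have := j_min i; rewrite i_gt0 dvd_i leqNgt lt_ij => /(_ isT).
Qed.

Lemma z_prime q : prime q -> is_rank q (z q) /\ z q <= q.+1.
Proof.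
move=> q_prime; have [k /andP[k_gt0 le_kq] dvd_k] := prime_dvd_fib_le q_prime.
have z_rank := z_is_rank (ex_intro2 _ _ k k_gt0 dvd_k).
by split=> //; apply: leq_trans (is_rank_le z_rank k_gt0 dvd_k) le_kq.
Qed.

Lemma coprime_z_prime q : prime q -> q != 5 -> coprime q (z q).
Proof.
move=> q_prime q_neq5; rewrite prime_coprime //.
have [[z_gt0 [dvd_z _]] le_zq] := z_prime q_prime.
apply: contra (prime_ndvd_fib q_prime q_neq5) => /dvdnP[c z_eq].
have q_gt1 := prime_gt1 q_prime.
have c_eq1 : c = 1 by move: z_gt0 le_zq; rewrite z_eq; nia.
by rewrite -[q in fib q]mul1n -c_eq1 -z_eq.
Qed.

Lemma totient_ell_prime q : prime q -> q != 5 -> totient (ell q) = q.-1 * totient (z q).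
Proof.
move=> q_prime q_neq5; have co_qz := coprime_z_prime q_prime q_neq5.
by rewrite /ell /lcmn (eqP co_qz) divn1 totient_coprime // totient_prime.
Qed.

Lemma fib_gt0 k : 0 < k -> 0 < fib k.
Proof.
suff fib_pos j : 0 < fib j.+1 /\ 0 < fib j.+2 by case: k => // k _; case: (fib_pos k).
by elim: j => [|j [_ IH]]; split=> //=; rewrite addn_gt0 IH.
Qed.

Lemma fib_le_exp2 k : fib k <= 2 ^ k.
Proof.
suff fib_le j : fib j <= 2 ^ j /\ fib j.+1 <= 2 ^ j.+1 by case: (fib_le k).
elim: j => [|j [IH1 IH2]]; split=> //.
rewrite -[fib j.+2]/(fib j.+1 + fib j) expnS mul2n -addnn.
by rewrite leq_add // (leq_trans IH1) // leq_pexp2l.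
Qed.

Lemma exp2_size_primes n : 0 < n -> 2 ^ size (primes n) <= n.
Proof.
move=> n_gt0; rewrite {2}(prod_prime_decomp n_gt0) prime_decompE big_map /=.
rewrite -sum1_size expn_sum !big_seq; apply: leq_prod => p p_in.
have p_prime : prime p by move: p_in; rewrite mem_primes => /and3P[].
apply: leq_trans (prime_gt1 p_prime) _.
by rewrite -[p in p <= _]expn1 (leq_pexp2l (prime_gt0 p_prime)) // logn_gt0.
Qed.

Lemma size_primes_fib k : size (primes (fib k)) <= k.
Proof.
case: k => // k; rewrite -(@leq_exp2l 2) //.
exact: leq_trans (exp2_size_primes (fib_gt0 _)) (fib_le_exp2 _).
Qed.

Lemma pfactor_le_totient_sqr p e : prime p -> 0 < e ->
  p ^ e <= 2 ^ (p == 2) * (totient (p ^ e) * totient (p ^ e)).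
Proof.
move=> p_prime e_gt0; rewrite totient_pfactor //.
have p_gt1 := prime_gt1 p_prime.
rewrite -[in p ^ e](prednK e_gt0) expnS.
have : 0 < p ^ e.-1 by rewrite expn_gt0 prime_gt0.
move: (p ^ e.-1) => t t_gt0.
case: eqP => [-> | /eqP p_neq2] /=; first nia.
have p_gt2 : 2 < p by lia.
have le_p : p <= p.-1 * p.-1 by nia.
have le_t : t <= t * t by nia.
by rewrite mul1n mulnACA leq_mul.
Qed.

Lemma le_totient_sqr n : 0 < n -> n <= 2 * totient n ^ 2.
Proof.
move=> n_gt0.
have prime_in p : p \in primes n -> prime p by rewrite mem_primes => /andP[].
have totient_n : totient n = \prod_(p <- primes n) totient (p ^ logn p n).
  rewrite totientE // !big_seq; apply: eq_bigr => p p_in.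
  by rewrite totient_pfactor ?prime_in ?logn_gt0.
have even_part : \prod_(p <- primes n) 2 ^ (p == 2) <= 2.
  rewrite -expn_sum (eq_bigr (fun p => if p == 2 then 1 else 0)) => [|p _]; last by case: eqP.
  by rewrite -big_mkcond sum1_count count_uniq_mem ?primes_uniq //; case: (2 \in _).
rewrite {1}(prod_prime_decomp n_gt0) prime_decompE big_map -mulnn totient_n /=.
rewrite -big_split /= (leq_trans _ (leq_mul even_part (leqnn _))) // -big_split /=.
rewrite !big_seq; apply: leq_prod => p p_in.
by apply: pfactor_le_totient_sqr; rewrite ?prime_in ?logn_gt0.
Qed.

Local Open Scope R_scope.

HB.instance Definition _ := Monoid.isComLaw.Build R 0 Rplus
  (fun x y z => esym (Rplus_assoc x y z)) Rplus_comm Rplus_0_l.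

Local Notation "\sum_ ( i <- r | P ) F" := (\big[Rplus/0]_(i <- r | P) F) : R_scope.
Local Notation "\sum_ ( m <= i < n | P ) F" := (\big[Rplus/0]_(m <= i < n | P) F) : R_scope.
Local Notation "\sum_ ( m <= i < n ) F" := (\big[Rplus/0]_(m <= i < n) F) : R_scope.

Section RealSums.
Variable I : Type.
Implicit Types (r : seq I) (P Q : pred I) (F G : I -> R).

Lemma Rsum_le r P F G : (forall i, P i -> F i <= G i) ->
  \sum_(i <- r | P i) F i <= \sum_(i <- r | P i) G i.
Proof.
move=> FG; apply: (big_ind2 Rle) => // [|x1 x2 y1 y2]; [lra | exact: Rplus_le_compat].
Qed.

Lemma Rsum_const r P c : \sum_(i <- r | P i) c = INR (count P r) * c.
Proof.
rewrite big_const_seq; elim: (count P r) => [|n IH]; first by rewrite /=; lra.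
by rewrite iterS IH S_INR; lra.
Qed.

Lemma Rsum_subpred r P Q F : (forall i, P i -> Q i) -> (forall i, Q i -> 0 <= F i) ->
  \sum_(i <- r | P i) F i <= \sum_(i <- r | Q i) F i.
Proof.
move=> PQ F_ge0; rewrite [X in X <= _]big_mkcond [X in _ <= X]big_mkcond.
apply: Rsum_le => i _; case: ifP => [/PQ -> | _]; first lra.
by case: ifP => [/F_ge0|_]; lra.
Qed.

End RealSums.

Lemma Rsum_telescope_le (Q : pred nat) (g : nat -> R) (G : R) n : 0 <= G ->
  (forall k, Q k -> Q k.+1) -> (forall k, Q k -> 0 <= g k <= G) ->
  \sum_(0 <= k < n | Q k) (g k - g k.+1) <= G.
Proof.
move=> G_ge0 Q_up g_bnd.
suff : \sum_(0 <= k < n | Q k) (g k - g k.+1) + (if Q n then g n else G) <= G.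
  by case: ifP => [/g_bnd[g_ge0 _] | _] sum_bnd; lra.
elim: n => [|n IH]; first by rewrite big_geq //; case: ifP => [/g_bnd[]|_]; lra.
rewrite big_mkcond big_nat_recr //= -big_mkcond /=.
case: ifP IH => [Qn | _] IH; first by rewrite (Q_up _ Qn); lra.
by case: ifP => [/g_bnd[]|_]; lra.
Qed.

Lemma INR_count_iota_le (Q : pred nat) (X : R) n :
  (forall k, Q k -> (0 < k)%N /\ INR k <= X) -> 0 <= X -> INR (count Q (iota 0 n)) <= X.
Proof.
move=> QX X_ge0; elim: n => [|n IH]; first by rewrite /=; lra.
rewrite -addn1 iotaD count_cat /= addn0 add0n.
case Qn: (Q n); last by rewrite addn0.
have [n_gt0 n_le] := QX n Qn.
suff : (count Q (iota 0 n) <= n.-1)%N.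
  have pred_n : INR n.-1 + 1 = INR n by rewrite -S_INR prednK.
  by move/leP/le_INR; rewrite plus_INR /=; lra.
case: n n_gt0 {IH Qn n_le} => // n _ /=.
case: (Q 0%N) (QX 0%N) => [/(_ isT)[] // | _].
by rewrite add0n (leq_trans (count_size _ _)) ?size_iota.
Qed.

Lemma pow_sub_le (a b : R) n : 0 <= a <= b ->
  b ^ n.+1 - a ^ n.+1 <= INR n.+1 * b ^ n * (b - a).
Proof.
move=> [a_ge0 le_ab]; elim: n => [|n IH]; first by rewrite /=; lra.
have le_pow : a ^ n.+1 <= b ^ n.+1 by apply: pow_incr.
have := Rmult_le_compat_l b _ _ ltac:(lra) IH.
have := Rmult_le_compat_l (b - a) _ _ ltac:(lra) le_pow.
rewrite [INR n.+2]S_INR -[a ^ n.+2]tech_pow_Rmult -[b ^ n.+2]tech_pow_Rmult.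
rewrite -[b ^ n.+1]tech_pow_Rmult; lra.
Qed.

(* A discrete derivative bound for [x^(-1/(r+1))], with [a = x^(1/(r+1))] and
   [b = (x+1)^(1/(r+1))]. *)
Lemma inv_mul_root_le r (x a b : R) : 1 <= x -> 0 < a <= b ->
  a ^ r.+1 = x -> b ^ r.+1 = x + 1 -> / (x * a) <= 2 * INR r.+1 * (/ a - / b).
Proof.
move=> x_ge1 [a_gt0 le_ab] ax bx.
have := pow_sub_le r (conj (Rlt_le _ _ a_gt0) le_ab).
rewrite ax bx => sub_le.
have R_ge0 := pos_INR r.+1.
have le_b : b <= 2 * INR r.+1 * x * (b - a).
  have b_mul : b * (INR r.+1 * b ^ r * (b - a)) = INR r.+1 * (b - a) * (x + 1).
    by rewrite -bx -tech_pow_Rmult; ring.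
  have := Rmult_le_compat_l b _ _ ltac:(lra) sub_le.
  have := Rmult_le_compat_l (INR r.+1 * (b - a)) (x + 1) (2 * x) ltac:(nra) ltac:(lra).
  lra.
have xab_gt0 : 0 < x * a * b by apply: Rmult_lt_0_compat; nra.
have -> : / (x * a) = b * / (x * a * b) by field; lra.
have -> : 2 * INR r.+1 * (/ a - / b) = 2 * INR r.+1 * x * (b - a) * / (x * a * b).
  by field; lra.
by apply: Rmult_le_compat_r => //; apply/Rlt_le/Rinv_0_lt_compat.
Qed.

(* True at [x = 0] as well, since [/ 0 = 0]. *)
Lemma Rinv_ge0 x : 0 <= x -> 0 <= / x.
Proof.
by case=> [x_gt0 | <-]; [apply/Rlt_le/Rinv_0_lt_compat | rewrite Rinv_0; apply: Rle_refl].
Qed.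

Lemma INR_ge1 n : (0 < n)%N -> 1 <= INR n.
Proof. by move=> n_gt0; apply: (le_INR 1); apply/leP. Qed.

Lemma Rpower_gt0 x y : 0 < Rpower x y.
Proof. exact: exp_pos. Qed.

Lemma Rpower_quarter_pow4 x : 0 < x -> Rpower x (1 / 4) ^ 4 = x.
Proof.
move=> x_gt0; rewrite -(@Rpower_pow 4 _ (Rpower_gt0 x (1 / 4))) Rpower_mult.
by rewrite (_ : 1 / 4 * INR 4 = 1) ?Rpower_1 //=; field.
Qed.

Lemma Rpower_quarter_sqr x : 0 < x -> Rpower x (1 / 4) ^ 2 = sqrt x.
Proof.
move=> x_gt0; rewrite -(@Rpower_pow 2 _ (Rpower_gt0 x (1 / 4))) Rpower_mult -Rpower_sqrt //.
by congr Rpower; rewrite /=; field.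
Qed.

Lemma Rpower_quarter_mul x : 0 < x -> Rpower (x * x) (1 / 4) = sqrt x.
Proof.
move=> x_gt0; rewrite -Rpower_sqrt // (_ : x * x = x ^ 2); last by ring.
by rewrite -Rpower_pow // Rpower_mult; congr Rpower; rewrite /=; field.
Qed.

Lemma Rpower_quarter_le_sqrt x y : 0 < x -> 0 < y <= x * x -> Rpower y (1 / 4) <= sqrt x.
Proof. by move=> x_gt0 y_bnd; rewrite -Rpower_quarter_mul //; apply: Rle_Rpower_l; lra. Qed.

Lemma sqrt_le_Rpower_quarter x y : 0 < x -> x * x <= y -> sqrt x <= Rpower y (1 / 4).
Proof.
move=> x_gt0 le_xx_y; rewrite -Rpower_quarter_mul //; apply: Rle_Rpower_l; first lra.
by split=> //; apply: Rmult_lt_0_compat.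
Qed.

Lemma inv_mul_Rpower_quarter_le x : 1 <= x ->
  / (x * Rpower x (1 / 4)) <= 8 * (/ Rpower x (1 / 4) - / Rpower (x + 1) (1 / 4)).
Proof.
move=> x_ge1; rewrite (_ : 8 = 2 * INR 4); last by rewrite /=; lra.
apply: inv_mul_root_le => //; rewrite ?Rpower_quarter_pow4 //; try lra.
by split; [apply: Rpower_gt0 | apply: Rle_Rpower_l; lra].
Qed.

Lemma inv_mul_sqrt_le x : 1 <= x -> / (x * sqrt x) <= 4 * (/ sqrt x - / sqrt (x + 1)).
Proof.
move=> x_ge1; rewrite (_ : 4 = 2 * INR 2); last by rewrite /=; lra.
apply: inv_mul_root_le => //; rewrite ?pow2_sqrt //; try lra.
by split; [apply: sqrt_lt_R0 | apply: sqrt_le_1_alt]; lra.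
Qed.

(** * The tail estimate *)

(* [tail_sum y] filters the primes [q] with [Rltb y (INR q)], unfolded. *)
Definition Rltb (x y : R) : bool := if Rlt_dec x y then true else false.

Lemma RltbP x y : reflect (x < y) (Rltb x y).
Proof. by rewrite /Rltb; case: Rlt_dec => ?; constructor. Qed.

Lemma inv_totient_ell_le q : prime q -> q != 5%N ->
  / INR (totient (ell q)) <= 4 / (INR q * sqrt (INR (z q))).
Proof.
move=> q_prime q_neq5; rewrite totient_ell_prime // mult_INR.
have [[z_gt0 _] _] := z_prime q_prime.
have q_ge2 : 2 <= INR q by apply: (le_INR 2); apply/leP; apply: prime_gt1.
have q_pred : INR q = INR q.-1 + 1 by rewrite -S_INR prednK ?prime_gt0.
have le_q : INR q <= 2 * INR q.-1 by lra.
have z_ge1 := INR_ge1 z_gt0.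
have f_ge1 : 1 <= INR (totient (z q)) by apply: INR_ge1; rewrite totient_gt0.
have : INR (z q) <= INR (2 * (totient (z q) * totient (z q))).
  by apply: le_INR; apply/leP; rewrite mulnn le_totient_sqr.
rewrite !mult_INR [INR 2]/= => le_z.
set f := INR (totient (z q)) in le_z f_ge1 *.
have le_sqrt_z : sqrt (INR (z q)) <= 2 * f.
  by rewrite -(sqrt_square (2 * f)); [apply: sqrt_le_1_alt | ]; lra.
have sqrt_z_gt0 : 0 < sqrt (INR (z q)) by apply: sqrt_lt_R0; lra.
have prod_le := Rmult_le_compat _ _ _ _ (pos_INR q) (sqrt_pos _) le_q le_sqrt_z.
apply: (Rle_trans _ (/ (INR q * sqrt (INR (z q)) / 4))); last by right; field; nra.
by apply: Rinv_le_contravar; nra.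
Qed.

Lemma inv_totient_ell_five : 1 / INR (totient (ell 5)) <= 16 / (INR 5 * Rpower (INR 5) (1 / 4)).
Proof.
have five_R : INR 5 = 5 by rewrite /=; lra.
have tot_ge1 : 1 <= INR (totient (ell 5)).
  apply: INR_ge1; rewrite totient_gt0 /ell lcmn_gt0 /=.
  by case: (z_prime (isT : prime 5)) => -[].
have a_gt0 := Rpower_gt0 (INR 5) (1 / 4).
have a_le2 : Rpower (INR 5) (1 / 4) <= 2.
  apply: Rnot_lt_le => a_gt2.
  have : 2 ^ 4 <= Rpower (INR 5) (1 / 4) ^ 4 by apply: pow_incr; lra.
  by rewrite Rpower_quarter_pow4; lra.
move: a_gt0 a_le2; rewrite five_R => a_gt0 a_le2.
have : / 16 <= / (5 * Rpower 5 (1 / 4)) by apply: Rinv_le_contravar; lra.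
have : / INR (totient (ell 5)) <= / 1 by apply: Rinv_le_contravar; lra.
by rewrite Rinv_1 /Rdiv; lra.
Qed.

Definition small_rank_term (q : nat) : R :=
  if (z q * z q < q)%N then 4 / (INR q * sqrt (INR (z q))) else 0.

Lemma small_rank_term_ge0 q : 0 <= small_rank_term q.
Proof.
rewrite /small_rank_term; case: ifP => _; last lra.
apply: Rmult_le_pos; first lra.
by apply/Rinv_ge0/Rmult_le_pos; [apply: pos_INR | apply: sqrt_pos].
Qed.

Lemma inv_totient_ell_split q : prime q ->
  1 / INR (totient (ell q)) <= 16 / (INR q * Rpower (INR q) (1 / 4)) + small_rank_term q.
Proof.
move=> q_prime; have := small_rank_term_ge0 q.
have [-> | q_neq5] := eqVneq q 5%N; first by have := inv_totient_ell_five; lra.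
have q_gt0 : 0 < INR q by apply/lt_0_INR/ltP/prime_gt0.
have z_ge1 : 1 <= INR (z q) by apply: INR_ge1; case: (z_prime q_prime) => -[].
have q4_gt0 := Rpower_gt0 (INR q) (1 / 4).
have := inv_totient_ell_le q_prime q_neq5.
have : 0 <= 16 / (INR q * Rpower (INR q) (1 / 4)).
  by apply/Rlt_le/Rdiv_lt_0_compat; [lra | apply: Rmult_lt_0_compat].
rewrite /small_rank_term; case: ltnP => [_ | le_q_zz]; first lra.
have q4_le : Rpower (INR q) (1 / 4) <= sqrt (INR (z q)).
  apply: Rpower_quarter_le_sqrt; first lra.
  by split=> //; rewrite -mult_INR; apply: le_INR; apply/leP.
have : 4 / (INR q * sqrt (INR (z q))) <= 4 / (INR q * Rpower (INR q) (1 / 4)).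
  apply: Rmult_le_compat_l; first lra.
  by apply: Rinv_le_contravar; [apply: Rmult_lt_0_compat | apply: Rmult_le_compat_l]; lra.
by rewrite /Rdiv; lra.
Qed.

Lemma sum_inv_pow_five_quarters_le y n : 0 < y ->
  \sum_(0 <= q < n | Rltb y (INR q)) 16 / (INR q * Rpower (INR q) (1 / 4))
  <= 128 / Rpower y (1 / 4).
Proof.
move=> y_gt0; set g := fun k => 128 / Rpower (INR k) (1 / 4).
have y4_gt0 := Rpower_gt0 y (1 / 4).
apply: (Rle_trans _ (\sum_(0 <= q < n | Rltb y (INR q)) (g q - g q.+1))).
  apply: Rsum_le => q /RltbP y_lt_q.
  have q_ge1 : 1 <= INR q.
    by apply: INR_ge1; case: q y_lt_q => //= y_lt0; exfalso; lra.
  have := inv_mul_Rpower_quarter_le q_ge1; rewrite /g -S_INR /Rdiv; lra.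
apply: Rsum_telescope_le => [|k /RltbP y_lt_k|k /RltbP y_lt_k].
- by apply/Rlt_le/Rdiv_lt_0_compat; lra.
- by apply/RltbP; rewrite S_INR; lra.
- have k4_gt0 := Rpower_gt0 (INR k) (1 / 4); split.
    by apply/Rlt_le/Rdiv_lt_0_compat; lra.
  apply: Rmult_le_compat_l; first lra.
  by apply: Rinv_le_contravar => //; apply: Rle_Rpower_l; lra.
Qed.

Lemma sum_small_rank_by_rank (P : pred nat) N : (forall q, P q -> prime q) ->
  \sum_(0 <= q < N.+1 | P q) small_rank_term q =
  \sum_(0 <= k < N.+2) \sum_(0 <= q < N.+1 | P q && (k == z q)) small_rank_term q.
Proof.
move=> P_prime.
rewrite [RHS](exchange_big_dep P) /=; last by move=> k q _ /andP[].
rewrite big_seq_cond [RHS]big_seq_cond; apply: eq_bigr => q /andP[q_in Pq].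
rewrite (eq_bigl (fun k => k == z q)) => [|k]; last by rewrite Pq.
have [_ le_zq] := z_prime (P_prime q Pq).
by rewrite big_nat1_eq ifT //; move: q_in; rewrite mem_index_iota; lia.
Qed.

Lemma count_rank_fibre_le (P : pred nat) k r : uniq r -> (forall q, P q -> prime q) ->
  (count (fun q => P q && (k == z q)) r <= k)%N.
Proof.
move=> r_uniq P_prime; apply: leq_trans (size_primes_fib k).
rewrite -size_filter; apply: uniq_leq_size => [|q]; first exact: filter_uniq.
rewrite mem_filter => /andP[/andP[/P_prime q_prime /eqP ->] _].
have [[z_gt0 [dvd_z _]] _] := z_prime q_prime.
by rewrite mem_primes q_prime fib_gt0.
Qed.

Lemma sum_small_rank_fibre_le y N k : 0 < y ->
  \sum_(0 <= q < N.+1 | prime q && Rltb y (INR q) && (k == z q)) small_rank_term q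
  <= 4 * sqrt (INR k) / Rmax y (INR (k * k)).
Proof.
move=> y_gt0; set M := Rmax y (INR (k * k)).
have M_gt0 : 0 < M by apply: (Rlt_le_trans _ y); [ | apply: Rmax_l].
have c_ge0 : 0 <= 4 / (M * sqrt (INR k)).
  by apply: Rmult_le_pos; [lra | apply/Rinv_ge0/Rmult_le_pos; [lra | apply: sqrt_pos]].
apply: (Rle_trans _ (\sum_(0 <= q < N.+1 | prime q && Rltb y (INR q) && (k == z q))
                        4 / (M * sqrt (INR k)))).
  apply: Rsum_le => q /andP[/andP[q_prime /RltbP y_lt_q] /eqP k_eq].
  rewrite /small_rank_term -k_eq; case: ltnP => // kk_lt_q.
  have [[z_gt0 _] _] := z_prime q_prime; rewrite -k_eq in z_gt0.
  have sqrt_k_gt0 : 0 < sqrt (INR k) by apply/sqrt_lt_R0/lt_0_INR/ltP.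
  have M_lt_q : M < INR q.
    by apply: Rmax_lub_lt => //; apply: lt_INR; apply/ltP.
  apply: Rmult_le_compat_l; first lra.
  by apply: Rinv_le_contravar; [ | apply: Rmult_le_compat_r]; nra.
rewrite Rsum_const.
apply: (Rle_trans _ (INR k * (4 / (M * sqrt (INR k))))).
  apply: Rmult_le_compat_r => //; apply: le_INR; apply/leP.
  by apply: count_rank_fibre_le => [|q /andP[]//]; apply: iota_uniq.
have [-> | k_gt0] := posnP k; first by rewrite /= sqrt_0; lra.
have sqrt_k_gt0 : 0 < sqrt (INR k) by apply/sqrt_lt_R0/lt_0_INR/ltP.
have k_sqr : INR k = sqrt (INR k) * sqrt (INR k) by rewrite sqrt_sqrt //; apply: pos_INR.
by right; rewrite {1}k_sqr; field; split; lra.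
Qed.

Lemma fibre_bound_split y k : 0 < y ->
  4 * sqrt (INR k) / Rmax y (INR (k * k)) <=
  (if (0 < k)%N && ~~ Rltb y (INR (k * k)) then 4 * Rpower y (1 / 4) / y else 0) +
  (if Rltb y (INR (k * k)) then 16 / sqrt (INR k) - 16 / sqrt (INR k.+1) else 0).
Proof.
move=> y_gt0.
have [-> | k_gt0] := posnP k.
  by rewrite /= sqrt_0 Rmult_0_r /Rdiv Rmult_0_l; case: RltbP; lra.
have k_ge1 := INR_ge1 k_gt0.
have sqrt_k_gt0 : 0 < sqrt (INR k) by apply: sqrt_lt_R0; lra.
case: RltbP => [y_lt_kk | /Rnot_lt_le kk_le_y]; rewrite ?S_INR ?andbF ?k_gt0 /=.
  rewrite Rmax_right; last lra.
  have := inv_mul_sqrt_le k_ge1.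
  have -> : 4 * sqrt (INR k) / INR (k * k) = 4 * / (INR k * sqrt (INR k)).
    by rewrite mult_INR -{2}(sqrt_sqrt (INR k) (pos_INR k)); field; split; lra.
  by rewrite /Rdiv; lra.
rewrite Rmax_left // /Rdiv.
have : sqrt (INR k) <= Rpower y (1 / 4).
  by rewrite mult_INR in kk_le_y; apply: sqrt_le_Rpower_quarter; lra.
by have := Rinv_0_lt_compat y y_gt0; nra.
Qed.

Lemma sum_low_fibres_le y n : 0 < y ->
  \sum_(0 <= k < n | (0 < k)%N && ~~ Rltb y (INR (k * k))) 4 * Rpower y (1 / 4) / y
  <= 4 / Rpower y (1 / 4).
Proof.
move=> y_gt0; set a := Rpower y (1 / 4); have a_gt0 : 0 < a := Rpower_gt0 _ _.
rewrite Rsum_const.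
have count_le : INR (count (fun k => (0 < k)%N && ~~ Rltb y (INR (k * k))) (index_iota 0 n))
                <= sqrt y.
  apply: INR_count_iota_le => [k /andP[k_gt0 /RltbP /Rnot_lt_le kk_le_y] | ]; last exact: sqrt_pos.
  split=> //; have := sqrt_le_1_alt _ _ kk_le_y.
  by rewrite mult_INR sqrt_square //; apply: pos_INR.
have := Rmult_le_compat_r (4 * a / y) _ _ ltac:(apply/Rlt_le/Rdiv_lt_0_compat; lra) count_le.
have a2 : a ^ 2 = sqrt y := Rpower_quarter_sqr y_gt0.
have a4 : a ^ 4 = y := Rpower_quarter_pow4 y_gt0.
by have -> : sqrt y * (4 * a / y) = 4 / a by rewrite -a2 -a4; field; lra.
Qed.

Lemma sum_high_fibres_le y n : 0 < y ->
  \sum_(0 <= k < n | Rltb y (INR (k * k))) (16 / sqrt (INR k) - 16 / sqrt (INR k.+1))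
  <= 16 / Rpower y (1 / 4).
Proof.
move=> y_gt0; have a_gt0 := Rpower_gt0 y (1 / 4).
apply: Rsum_telescope_le => [|k /RltbP y_lt_kk|k /RltbP y_lt_kk].
- by apply/Rlt_le/Rdiv_lt_0_compat; lra.
- by apply/RltbP/(Rlt_le_trans _ _ _ y_lt_kk)/le_INR/leP; rewrite leq_mul.
- have k_gt0 : 0 < INR k.
    by apply: lt_0_INR; apply/ltP; case: k y_lt_kk => //= y_lt0; exfalso; lra.
  have a_le : Rpower y (1 / 4) <= sqrt (INR k).
    by rewrite mult_INR in y_lt_kk; apply: Rpower_quarter_le_sqrt; lra.
  split; first by apply/Rlt_le/Rdiv_lt_0_compat; lra.
  by rewrite /Rdiv; apply: Rmult_le_compat_l; [lra | apply: Rinv_le_contravar].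
Qed.

Lemma sum_fibre_bound_le y n : 0 < y ->
  \sum_(0 <= k < n) 4 * sqrt (INR k) / Rmax y (INR (k * k)) <= 20 / Rpower y (1 / 4).
Proof.
move=> y_gt0; apply: Rle_trans (Rsum_le _ (fun k _ => fibre_bound_split k y_gt0)) _.
rewrite big_split -!big_mkcond.
apply: Rle_trans (Rplus_le_compat _ _ _ _ (sum_low_fibres_le n y_gt0)
                                         (sum_high_fibres_le n y_gt0)) _.
by rewrite /Rdiv; lra.
Qed.

Theorem lemma2p4 :
  exists C : R, Rlt R0 C /\
    forall (y : R), Rlt R0 y -> forall N : nat,
      Rle (tail_sum y N) (Rdiv C (Rpower y (Rdiv 1 4))).
Proof.
exists 148; split; first lra.
move=> y y_gt0 N; set P := fun q => prime q && Rltb y (INR q).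
have P_prime q : P q -> prime q by case/andP.
apply: (Rle_trans _ (\sum_(0 <= q < N.+1 | P q)
  (16 / (INR q * Rpower (INR q) (1 / 4)) + small_rank_term q))).
  by apply: Rsum_le => q /P_prime; apply: inv_totient_ell_split.
rewrite big_split /=.
have large_rank : \sum_(0 <= q < N.+1 | P q) 16 / (INR q * Rpower (INR q) (1 / 4))
                   <= 128 / Rpower y (1 / 4).
  apply: Rle_trans (sum_inv_pow_five_quarters_le N.+1 y_gt0).
  apply: Rsum_subpred => [q /andP[] // | q _].
  apply: Rmult_le_pos; first lra.
  by apply/Rinv_ge0/Rmult_le_pos; [apply: pos_INR | apply/Rlt_le/Rpower_gt0].
have small_rank : \sum_(0 <= q < N.+1 | P q) small_rank_term q <= 20 / Rpower y (1 / 4).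
  rewrite sum_small_rank_by_rank //.
  apply: Rle_trans (sum_fibre_bound_le N.+2 y_gt0).
  by apply: Rsum_le => k _; apply: sum_small_rank_fibre_le.
rewrite /Rdiv in large_rank small_rank *; lra.
Qed.
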